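(* Let $\mu\in\Delta(S)$ and let $(\pi^{(t)})$ be the iterates of Algorithm SMISBR with parameter $\tau>0$, and suppose the algorithm does not stop at step $t$. Then for every $i\in I$, $$\max_{\pi_i'\in\Pi_i}V_i(\mu,\pi_i',\pi_{-i}^{(t)})-V_i(\mu,\pi^{(t)})\le\frac{1}{1-\delta}\Big(\Delta_{\bar i_t}^{(t)}(\bar s_t)+2\tau\log\bar A\Big),$$ where $\bar A=\max_i|A_i|$.
   Context: Markov game $\langle I,S,(A_i),(u_i),P,\delta\rangle$ with finite $I,S,A_i$, $\delta\in(0,1)$; stationary policies $\pi_i$ with $\pi_i(s)\in\Delta(A_i)$, sets $\Pi_i$, $\pi_{-i}(s,a_{-i})=\prod_{j\neq i}\pi_j(s,a_j)$. $V_i(\mu,\pi)=\mathbb E[\sum_k\delta^ku_i(s^k,a^k)]$ with $s^0\sim\mu$, $a^k\sim\pi(s^k)$, $s^{k+1}\sim P(\cdot|s^k,a^k)$. $\nu_i(s,\pi_i)=\sum_{a_i}\pi_i(s,a_i)\log\pi_i(s,a_i)$. $\tilde V_i(s,\pi)=\mathbb E[\sum_k\delta^k(u_i(s^k,a^k)-\tau\nu_i(s^k,\pi_i))\mid s^0=s]$. $\tilde Q_i(s,a_i;\pi)=\sum_{a_{-i}}\pi_{-i}(s,a_{-i})\big(u_i(s,a)-\tau\nu_i(s,\pi_i)+\delta\sum_{s'}P(s'|s,a)\tilde V_i(s',\pi)\big)$; $\tilde Q_i^{(t)}(s,p)=\sum_{a_i}p(a_i)\tilde Q_i(s,a_i;\pi^{(t)})$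 for $p\in\Delta(A_i)$. Algorithm SMISBR with $\tau>0$: $\pi_i^{(0)}(s,a_i)=1/|A_i|$. At step $t$: $BR_i^{(t)}(s,a_i)=\exp(\tilde Q_i(s,a_i;\pi^{(t)})/\tau)/\sum_{a'}\exp(\tilde Q_i(s,a';\pi^{(t)})/\tau)$; $\Delta_i^{(t)}(s)=\max_{p\in\Delta(A_i)}(\tilde Q_i^{(t)}(s,p)-\tau\nu_i(s,p))-(\tilde Q_i^{(t)}(s,\pi_i^{(t)}(s))-\tau\nu_i(s,\pi_i^{(t)}))$. If all $\Delta_i^{(t)}(s)\le0$, stop. Else choose $(\bar i_t,\bar s_t)\in\arg\max_{i,s}\Delta_i^{(t)}(s)$, set $\pi_{\bar i_t}^{(t+1)}(\bar s_t)=BR_{\bar i_t}^{(t)}(\bar s_t)$, leave all other components unchanged. *)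

From HB Require Import structures.
From mathcomp Require Import all_boot all_order all_algebra.
From mathcomp Require Import all_classical all_reals.
From mathcomp Require Import topology normedtype sequences exp.
Unset Printing Implicit Defensive.
Import Order.TTheory GRing.Theory Num.Theory numFieldNormedType.Exports.
Local Open Scope ring_scope.
Local Open Scope classical_set_scope.

Record mgame (R : realType) := MGame {
  player : finType;
  state : finType;
  act : player -> finType;
  reward : player -> state -> {dffun forall i : player, act i} -> R;
  trans : state -> {dffun forall i : player, act i} -> state -> R;
  disc : R }.
Arguments player {R}. Arguments state {R}. Arguments act {R m}.
Arguments reward {R m}. Arguments trans {R m}. Arguments disc {R}.

Definition jact {R : realType} (G : mgame R) := {dffun forall i : player G, act i}.

Definition wf_game {R : realType} (G : mgame R) : Prop :=
  [/\ (forall (s : state G) (a : jact G) s', 0 <= trans s a s'),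
      (forall s (a : jact G), \sum_(s' : state G) trans s a s' = 1),
      0 < disc G < 1 &
      (forall i : player G, (0 < #|act i|)%N)].

Definition is_dist {R : realType} {T : finType} (p : T -> R) : Prop :=
  (forall x, 0 <= p x) /\ \sum_x p x = 1.

Definition profile {R : realType} (G : mgame R) := forall i : player G, state G -> act i -> R.

Definition is_policy {R : realType} {G : mgame R} {i : player G} (p : state G -> act i -> R) :=
  forall s, is_dist (p s).

Definition is_profile {R : realType} {G : mgame R} (pi : profile G) :=
  forall i, is_policy (pi i).

Definition deviate {R : realType} {G : mgame R} (pi : profile G) (i : player G)
  (p : state G -> act i -> R) : profile G :=
  @dfwith _ (fun j => state G -> act j -> R) pi i p.

Definition jprob {R : realType} {G : mgame R} (pi : profile G) (s : state G) (a : jact G) : R :=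
  \prod_(j : player G) pi j s (a j).

(* state distribution at step k: s^0 ~ mu, a^k ~ pi(s^k), s^{k+1} ~ P(.|s^k,a^k) *)
Fixpoint sdist {R : realType} {G : mgame R} (pi : profile G) (mu : state G -> R) (k : nat)
  : state G -> R :=
  match k with
  | O => mu
  | k'.+1 => fun s' => \sum_(s : state G) sdist pi mu k' s *
                  \sum_(a : jact G) jprob pi s a * trans s a s'
  end.

Definition exp_reward {R : realType} {G : mgame R} (pi : profile G) (mu : state G -> R)
  (r : state G -> jact G -> R) (k : nat) : R :=
  \sum_(s : state G) sdist pi mu k s * \sum_(a : jact G) jprob pi s a * r s a.

Definition sumoo {R : realType} (f : nat -> R) : R := limn (series f).

Definition V {R : realType} {G : mgame R} (i : player G) (mu : state G -> R) (pi : profile G) : R :=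
  sumoo (fun k => disc G ^+ k * exp_reward pi mu (reward i) k).

(* nu_i(s, p) = sum_a p(a) log p(a)   (ln 0 = 0, so 0 log 0 = 0) *)
Definition nu {R : realType} {T : finType} (p : T -> R) : R := \sum_a p a * ln (p a).

Definition dirac (R : realType) {T : finType} (s : T) : T -> R := fun s' => (s' == s)%:R.

Definition Vt {R : realType} {G : mgame R} (tau : R) (i : player G) (s : state G) (pi : profile G) : R :=
  sumoo (fun k => disc G ^+ k *
    exp_reward pi (dirac R s) (fun s' a => reward i s' a - tau * nu (pi i s')) k).

(* tilde Q_i(s, a_i; pi): sum over a_{-i} encoded as joint actions a with a i = a_i *)
Definition Qt {R : realType} {G : mgame R} (tau : R) (i : player G) (s : state G) (ai : act i)
  (pi : profile G) : R :=
  \sum_(a : jact G | a i == ai)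
     (\prod_(j : player G | j != i) pi j s (a j)) *
     (reward i s a - tau * nu (pi i s)
        + disc G * \sum_(s' : state G) trans s a s' * Vt tau i s' pi).

Definition Qtp {R : realType} {G : mgame R} (tau : R) (i : player G) (s : state G)
  (pi : profile G) (p : act i -> R) : R :=
  \sum_(ai : act i) p ai * Qt tau i s ai pi.

Definition Delta {R : realType} {G : mgame R} (tau : R) (pi : profile G) (i : player G)
  (s : state G) : R :=
  sup [set x | exists p : act i -> R, is_dist p /\ x = Qtp tau i s pi p - tau * nu p]
  - (Qtp tau i s pi (pi i s) - tau * nu (pi i s)).

Definition BR {R : realType} {G : mgame R} (tau : R) (pi : profile G) (i : player G)
  (s : state G) : act i -> R :=
  fun ai => expR (Qt tau i s ai pi / tau) /
            \sum_(b : act i) expR (Qt tau i s b pi / tau).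

Definition unif_profile {R : realType} (G : mgame R) : profile G :=
  fun i _ _ => (#|act i|%:R)^-1.

Definition update {R : realType} {G : mgame R} (pi : profile G) (i : player G) (s : state G)
  (q : act i -> R) : profile G :=
  deviate pi i (fun s' => if s' == s then q else pi i s').

(* (pis, ib, sb) is a run of SMISBR with parameter tau, in which the algorithm
   does not stop at any step k <= t: pis k = pi^(k), (ib k, sb k) = (ibar_k, sbar_k). *)
Definition smisbr_run_upto {R : realType} {G : mgame R} (tau : R) (pis : nat -> profile G)
  (ib : nat -> player G) (sb : nat -> state G) (t : nat) : Prop :=
  pis 0%N = unif_profile G /\
  forall k, (k <= t)%N ->
    [/\ exists i s, 0 < Delta tau (pis k) i s,
        (forall i s, Delta tau (pis k) i s <= Delta tau (pis k) (ib k) (sb k)) &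
        ((k < t)%N -> pis k.+1 = update (pis k) (ib k) (sb k) (BR tau (pis k) (ib k) (sb k)))].

Definition Abar {R : realType} (G : mgame R) : nat := \max_(i : player G) #|act i|.

From HB Require Import structures.
From mathcomp Require Import all_boot all_order all_algebra.
From mathcomp Require Import all_classical all_reals.
From mathcomp Require Import topology normedtype sequences exp.
From mathcomp Require Import lra.
Import Order.TTheory GRing.Theory Num.Theory.
Import numFieldNormedType.Exports.
Local Open Scope ring_scope.
Local Open Scope classical_set_scope.
Set Implicit Arguments.

(* Write pi = pi^(t), D = Delta_{ibar_t}(sbar_t) and f(s) = tilde V_i(s, pi).
   1. f is a fixed point of the one-step Bellman operator of pi for the
      entropy-regularised reward u_i - tau nu(pi_i), and tilde Q_i(s, q) is that
      operator evaluated with player i's action drawn from q.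
   2. Hence, for a deviation sigma = (p, pi_{-i}), the Bellman operator of sigma
      with reward u_i - tau nu(p) maps f below f + Delta_i(s) <= f + D: f is a
      D-supersolution.  A telescoping comparison principle turns this into
      "regularised value of sigma <= mu.f + D / (1 - delta)".
   3. Entropy bounds 0 <= -nu(q) <= log |A_i| relate regularised and plain
      values: V_i(sigma) <= regularised value of sigma, and
      mu.f <= V_i(pi) + tau log |A_i| / (1 - delta).
   Combining gives the bound with tau log Abar in place of 2 tau log Abar. *)

Lemma sum_dffun_prod (R : comNzRingType) (I : finType) (T_ : I -> finType)
    (F : forall i, T_ i -> R) :
  \sum_(a : {dffun forall i, T_ i}) \prod_i F i (a i) = \prod_i \sum_(x : T_ i) F i x.
Proof.
pose P_ := fun i => [ffun x : T_ i => F i x].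
transitivity (\sum_(t : fprod T_) \prod_(i in I) P_ i (t i)).
  rewrite (reindex (@dffun_of_fprod I T_)); last exact/onW_bij/dffun_of_fprod_bij.
  by apply: eq_bigr => t _; apply: eq_bigr => i _; rewrite /P_ !ffunE.
rewrite big_fprod.
rewrite -(bigA_distr_big_dep (fun i => tagged_with T_ i) (fun i y => untag 0 (P_ i) y)).
apply: eq_bigr => i _; rewrite (big_tag (fun i x => F i x)) big_mkcond /= [RHS]big_mkcond.
by apply: eq_bigr => y _; rewrite /untag; case: eqP => // e; rewrite /P_ ffunE.
Qed.

Section ConvexEntropySeries.
Variable R : realType.

Lemma convex_norm_le (T : finType) (w x : T -> R) B : is_dist w ->
  (forall j, `|x j| <= B) -> `|\sum_j w j * x j| <= B.
Proof.
move=> [w0 w1] xB; apply: le_trans (ler_norm_sum _ _ _) _.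
apply: le_trans (_ : \sum_j w j * B <= B).
  by apply: ler_sum => j _; rewrite normrM ger0_norm //; exact: ler_wpM2l.
by rewrite -mulr_suml w1 mul1r.
Qed.

Lemma convex_le (T : finType) (w x y : T -> R) : (forall j, 0 <= w j) ->
  (forall j, x j <= y j) -> \sum_j w j * x j <= \sum_j w j * y j.
Proof. by move=> w0 xy; apply: ler_sum => j _; exact: ler_wpM2l. Qed.

Lemma convexD_const (T : finType) (w x : T -> R) c : \sum_j w j = 1 ->
  \sum_j w j * (x j + c) = \sum_j w j * x j + c.
Proof.
move=> w1; rewrite -[c in RHS]mul1r -w1 mulr_suml -big_split.
by apply: eq_bigr => j _; rewrite mulrDr.
Qed.

Lemma norm_le_sum_norm (T U : finType) (f : T -> U -> R) t u :
  `|f t u| <= \sum_t' \sum_u' `|f t' u'|.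
Proof.
rewrite (bigD1 t) //= (bigD1 u) //= -addrA lerDl.
by apply: addr_ge0; apply: sumr_ge0 => *; [exact: normr_ge0 | exact: sumr_ge0].
Qed.

Lemma dist_le1 (T : finType) (q : T -> R) : is_dist q -> forall a, q a <= 1.
Proof. by case=> q0 q1 a; rewrite -q1 (bigD1 a) //= lerDl; exact: sumr_ge0. Qed.

Lemma nu_le0 (T : finType) (q : T -> R) : is_dist q -> nu q <= 0.
Proof.
move=> qd; apply: sumr_le0 => a _; apply: mulr_ge0_le0; first by case: qd.
exact/ln_le0/dist_le1.
Qed.

(* Gibbs' inequality: entropy is at most log of the alphabet size; the proof
   sums q a * log (1 / (n q a)) <= 1/n - q a, from log y <= y - 1. *)
Lemma entropy_le_ln_card (T : finType) (q : T -> R) : is_dist q -> - nu q <= ln (#|T|%:R).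
Proof.
move=> [q0 q1].
have nT : (0 < #|T|)%N.
  rewrite lt0n; apply/negP => /eqP/card0_eq h.
  by move: q1; rewrite big_pred0 // => /esym/eqP; rewrite oner_eq0.
set n : R := #|T|%:R.
have n0 : 0 < n by rewrite ltr0n.
have pointwise a : q a * (- ln (q a) - ln n) <= n^-1 - q a.
  have [->|qpos] := eqVneq (q a) 0; first by rewrite mul0r subr0 invr_ge0 ltW.
  have qa : 0 < q a by rewrite lt_neqAle eq_sym qpos q0.
  have nqa : 0 < n * q a by exact: mulr_gt0.
  have -> : - ln (q a) - ln n = ln ((n * q a)^-1).
    by rewrite lnV ?posrE // lnM ?posrE // opprD addrC.
  have ln_le : ln ((n * q a)^-1) <= (n * q a)^-1 - 1.
    have := @le_ln1Dx _ ((n * q a)^-1 - 1); rewrite [1 + _]addrC subrK.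
    by apply; rewrite ltrBrDl addrN invr_gt0.
  apply: le_trans (ler_wpM2l (ltW qa) ln_le) _.
  by rewrite mulrBr mulr1 invfM mulrCA mulfV ?mulr1 // gt_eqF.
have : \sum_a q a * (- ln (q a) - ln n) <= \sum_a (n^-1 - q a).
  by apply: ler_sum => a _; exact: pointwise.
rewrite sumrB q1 sumr_const -[_ *+ _]mulr_natr -/n mulVf ?gt_eqF // subrr.
have -> : \sum_a q a * (- ln (q a) - ln n) = - nu q - ln n.
  have lnE : ln n = \sum_a q a * ln n by rewrite -mulr_suml q1 mul1r.
  by rewrite [in RHS]lnE /nu -sumrN -sumrB; apply: eq_bigr => a _; rewrite mulrBr mulrN.
by rewrite subr_le0.
Qed.

Lemma cvg_series_comb (T : finType) (c : T -> R) (y : T -> nat -> R) :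
  (forall j, cvgn (series (y j))) ->
  series (fun k => \sum_j c j * y j k) @ \oo --> \sum_j c j * limn (series (y j)).
Proof.
move=> cy.
have -> : series (fun k => \sum_j c j * y j k) = (fun n => \sum_j c j * series (y j) n).
  apply/funext => n; rewrite /series /= exchange_big /=.
  by apply: eq_bigr => j _; rewrite mulr_sumr.
elim: (index_enum T) => [|j r IH].
  by rewrite big_nil; under eq_cvg do rewrite big_nil; exact: cvg_cst.
rewrite big_cons; under eq_cvg do rewrite big_cons.
by apply: cvgD => //; apply: cvgMl_tmp; exact: cy.
Qed.

Lemma discounted_series_cvg (dd : R) (x : nat -> R) B : 0 <= dd < 1 ->
  (forall k, `|x k| <= B) -> cvgn (series (fun k => dd ^+ k * x k)).
Proof.
move=> /andP[d0 d1] xB; apply: normed_cvg.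
have B0 : 0 <= B by exact: le_trans (normr_ge0 _) (xB 0%N).
apply: (@series_le_cvg _ _ (geometric B dd)).
- by move=> n /=.
- by move=> n; rewrite /geometric /= mulr_ge0 // exprn_ge0.
- move=> n /=; rewrite normrM ger0_norm ?exprn_ge0 // mulrC.
  by apply: ler_wpM2r => //; exact: exprn_ge0.
- by apply: is_cvg_geometric_series; rewrite ger0_norm.
Qed.

Lemma cvg_series_tail (y : nat -> R) : cvgn (series y) ->
  series (fun k => y k.+1) @ \oo --> limn (series y) - y 0%N.
Proof.
move=> cy.
have -> : series (fun k => y k.+1) = (fun n => series y n.+1 - y 0%N).
  by apply/funext => n; rewrite /series /= big_nat_recl //= addrAC subrr add0r.
by apply: cvgB; [rewrite (cvg_shiftS (series y)); exact: cy | exact: cvg_cst].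
Qed.

End ConvexEntropySeries.

Section MarkovGame.
Variable R : realType.
Variable G : mgame R.
Hypothesis wf : wf_game G.
Local Notation S := (state G).
Local Notation d := (disc G).
Implicit Types (σ π : profile G) (μ : S -> R) (r : S -> jact G -> R).

Lemma disc_range : 0 <= d < 1.
Proof. by case: wf => _ _ /andP[h1 h2] _; rewrite ltW. Qed.

Lemma discX_ge0 k : 0 <= d ^+ k.
Proof. by apply: exprn_ge0; case/andP: disc_range. Qed.

Lemma trans_dist s (a : jact G) : is_dist (trans s a).
Proof. by case: wf => h0 h1 _ _; split; [exact: h0 | exact: h1]. Qed.

Lemma jprob_dist σ s : is_profile σ -> is_dist (jprob σ s).
Proof.
move=> H; split => [a|]; first by apply: prodr_ge0 => j _; case: (H j s).
rewrite /jprob (@sum_dffun_prod R _ _ (fun j x => σ j s x)).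
by apply: big1 => j _; case: (H j s).
Qed.

Definition kernel σ (s s' : S) : R := \sum_a jprob σ s a * trans s a s'.

Lemma kernel_dist σ s : is_profile σ -> is_dist (kernel σ s).
Proof.
move=> H; have [j0 j1] := jprob_dist s H; split => [s'|].
  by apply: sumr_ge0 => a _; apply: mulr_ge0 => //; case: (trans_dist s a).
rewrite exchange_big /= -j1; apply: eq_bigr => a _.
by rewrite -mulr_sumr; case: (trans_dist s a) => _ ->; rewrite mulr1.
Qed.

Lemma kernel_integral σ s (f : S -> R) :
  \sum_a jprob σ s a * \sum_s' trans s a s' * f s' = \sum_s' kernel σ s s' * f s'.
Proof.
under eq_bigr do rewrite mulr_sumr.
rewrite exchange_big /=; apply: eq_bigr => s' _; rewrite /kernel mulr_suml.
by apply: eq_bigr => a _; rewrite mulrA.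
Qed.

Lemma sum_dirac (s : S) (f : S -> R) : \sum_s0 dirac R s s0 * f s0 = f s.
Proof.
rewrite (bigD1 s) //= /dirac eqxx mul1r big1 ?addr0 // => s0 /negbTE ->.
by rewrite mul0r.
Qed.

Lemma dirac_dist (s : S) : is_dist (dirac R s).
Proof.
split; first by move=> x; rewrite /dirac ler0n.
by have := sum_dirac s (fun _ => 1); under eq_bigr do rewrite mulr1.
Qed.

Lemma sdistS σ μ k s' : sdist σ μ k.+1 s' = \sum_s sdist σ μ k s * kernel σ s s'.
Proof. by []. Qed.

Lemma sdist_dist σ μ k : is_profile σ -> is_dist μ -> is_dist (sdist σ μ k).
Proof.
move=> H [m0 m1]; elim: k => [|k [IH0 IH1]] //; split => [s'|].
  rewrite sdistS; apply: sumr_ge0 => s _; apply: mulr_ge0 => //.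
  exact: (proj1 (kernel_dist s H)).
under eq_bigr do rewrite sdistS.
rewrite exchange_big /= -IH1; apply: eq_bigr => s _.
by rewrite -mulr_sumr; case: (kernel_dist s H) => _ ->; rewrite mulr1.
Qed.

Lemma sdist_lin σ μ k s' : sdist σ μ k s' = \sum_s μ s * sdist σ (dirac R s) k s'.
Proof.
elim: k s' => [|k IH] s' /=.
  rewrite (bigD1 s') //= /dirac eqxx mulr1 big1 ?addr0 // => s /negbTE.
  by rewrite eq_sym => ->; rewrite mulr0.
under eq_bigr do rewrite IH mulr_suml.
rewrite exchange_big /=; apply: eq_bigr => s _.
by rewrite mulr_sumr; apply: eq_bigr => s0 _; rewrite mulrA.
Qed.

Lemma sdist_shift σ μ k s' :
  sdist σ μ k.+1 s' = sdist σ (fun s1 => \sum_s μ s * kernel σ s s1) k s'.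
Proof.
elim: k s' => [|k IH] s' //.
by rewrite sdistS [RHS]sdistS; apply: eq_bigr => s _; rewrite IH.
Qed.

Lemma exp_reward_lin σ μ r k :
  exp_reward σ μ r k = \sum_s μ s * exp_reward σ (dirac R s) r k.
Proof.
rewrite /exp_reward; under eq_bigr do rewrite sdist_lin mulr_suml.
rewrite exchange_big /=; apply: eq_bigr => s _.
by rewrite mulr_sumr; apply: eq_bigr => s0 _; rewrite mulrA.
Qed.

Lemma exp_reward_dirac0 σ r s : exp_reward σ (dirac R s) r 0 = \sum_a jprob σ s a * r s a.
Proof. exact: (sum_dirac s (fun s0 => \sum_a jprob σ s0 a * r s0 a)). Qed.

Lemma exp_reward_diracS σ r s k : exp_reward σ (dirac R s) r k.+1 =
  \sum_s' kernel σ s s' * exp_reward σ (dirac R s') r k.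
Proof.
rewrite /exp_reward; under eq_bigr do rewrite sdist_shift.
have -> : (fun s1 => \sum_s0 dirac R s s0 * kernel σ s0 s1) = kernel σ s.
  by apply/funext => s1; rewrite (sum_dirac s (fun s0 => kernel σ s0 s1)).
exact: exp_reward_lin.
Qed.

Lemma exp_reward_bound σ μ r k : is_profile σ -> is_dist μ ->
  `|exp_reward σ μ r k| <= \sum_s \sum_a `|r s a|.
Proof.
move=> H md; apply: convex_norm_le => [|s]; first exact: sdist_dist.
apply: convex_norm_le; [exact: jprob_dist | exact: norm_le_sum_norm].
Qed.

Lemma exp_reward_le σ μ (r1 r2 : S -> jact G -> R) k : is_profile σ -> is_dist μ ->
  (forall s a, r1 s a <= r2 s a) -> exp_reward σ μ r1 k <= exp_reward σ μ r2 k.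
Proof.
move=> H md hr; have [sd0 _] := sdist_dist k H md.
apply: convex_le => // s; apply: convex_le => a; last exact: hr.
exact: (proj1 (jprob_dist s H)).
Qed.

Lemma exp_rewardD_const σ μ r c k : is_profile σ -> is_dist μ ->
  exp_reward σ μ (fun s a => r s a + c) k = exp_reward σ μ r k + c.
Proof.
move=> H md; have [_ sd1] := sdist_dist k H md.
rewrite /exp_reward -convexD_const //; apply: eq_bigr => s _.
by rewrite convexD_const //; case: (jprob_dist s H).
Qed.

(* Expected discounted total reward of the chain of sigma started from mu;
   V and tilde V are instances of it. *)
Definition value σ μ r := limn (series (fun k => d ^+ k * exp_reward σ μ r k)).

Lemma value_cvg σ μ r : is_profile σ -> is_dist μ ->
  cvgn (series (fun k => d ^+ k * exp_reward σ μ r k)).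
Proof.
move=> H md; apply: discounted_series_cvg disc_range _ => k.
exact: exp_reward_bound.
Qed.

Lemma value_le σ μ (r1 r2 : S -> jact G -> R) : is_profile σ -> is_dist μ ->
  (forall s a, r1 s a <= r2 s a) -> value σ μ r1 <= value σ μ r2.
Proof.
move=> H md hr; apply: ler_lim; [exact: value_cvg | exact: value_cvg |].
apply: nearW => n; rewrite /series /=; apply: ler_sum => k _.
by apply: ler_wpM2l; [exact: discX_ge0 | exact: exp_reward_le].
Qed.

Lemma valueD_const σ μ r c : is_profile σ -> is_dist μ ->
  value σ μ (fun s a => r s a + c) = value σ μ r + (1 - d)^-1 * c.
Proof.
move=> H md; have [d0 d1] := andP disc_range.
have nd1 : `|d| < 1 by rewrite ger0_norm.
rewrite /value.
have -> : (fun k => d ^+ k * exp_reward σ μ (fun s a => r s a + c) k) =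
    (fun k => d ^+ k * exp_reward σ μ r k) + geometric c d.
  apply/funext => k; rewrite exp_rewardD_const // mulrDr /geometric /=.
  by rewrite (mulrC (d ^+ k) c).
rewrite lim_seriesD; [|exact: value_cvg | exact: is_cvg_geometric_series].
by rewrite (cvg_lim _ (cvg_geometric_series nd1)) // mulrC.
Qed.

Lemma value_lin σ μ r : is_profile σ ->
  value σ μ r = \sum_s μ s * value σ (dirac R s) r.
Proof.
move=> H; rewrite /value.
have -> : (fun k => d ^+ k * exp_reward σ μ r k) =
    (fun k => \sum_s μ s * (d ^+ k * exp_reward σ (dirac R s) r k)).
  apply/funext => k; rewrite exp_reward_lin mulr_sumr.
  by apply: eq_bigr => s _; rewrite mulrCA.
apply: cvg_lim => //; apply: cvg_series_comb => s.
by apply: value_cvg => //; exact: dirac_dist.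
Qed.

Definition bellman_op σ r (f : S -> R) (s : S) : R :=
  \sum_a jprob σ s a * (r s a + d * \sum_s' trans s a s' * f s').

Lemma bellman_opE σ r f s : is_profile σ ->
  bellman_op σ r f s = \sum_a jprob σ s a * r s a + d * \sum_s' kernel σ s s' * f s'.
Proof.
move=> H; rewrite -kernel_integral mulr_sumr -big_split /=.
by apply: eq_bigr => a _; rewrite mulrDr mulrCA.
Qed.

Lemma value_bellman σ r s : is_profile σ ->
  value σ (dirac R s) r = bellman_op σ r (fun s' => value σ (dirac R s') r) s.
Proof.
move=> H; rewrite bellman_opE //.
have tail := cvg_series_tail (value_cvg r H (dirac_dist s)).
have first_step : (fun k => d ^+ k.+1 * exp_reward σ (dirac R s) r k.+1) =
    (fun k => \sum_s' (d * kernel σ s s') * (d ^+ k * exp_reward σ (dirac R s') r k)).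
  apply/funext => k; rewrite exp_reward_diracS mulr_sumr exprS.
  by apply: eq_bigr => s' _; rewrite -!mulrA; congr (_ * _); rewrite mulrCA.
rewrite first_step in tail.
have comb := cvg_series_comb (fun s' => d * kernel σ s s')
  (fun s' k => d ^+ k * exp_reward σ (dirac R s') r k)
  (fun s' => value_cvg r H (dirac_dist s')).
have := cvg_lim _ comb; rewrite (cvg_lim _ tail) // expr0 mul1r exp_reward_dirac0 => e.
have -> : d * \sum_s' kernel σ s s' * value σ (dirac R s') r =
    \sum_s' d * kernel σ s s' * value σ (dirac R s') r.
  by rewrite mulr_sumr; apply: eq_bigr => s' _; rewrite mulrA.
by rewrite -e // addrC subrK.
Qed.

Lemma supersolution_step σ μ r (f : S -> R) D N : is_profile σ -> is_dist μ ->
  (forall s, bellman_op σ r f s <= f s + D) ->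
  exp_reward σ μ r N + d * \sum_s' sdist σ μ N.+1 s' * f s' <=
  \sum_s sdist σ μ N s * f s + D.
Proof.
move=> H md hb; have [sd0 sd1] := sdist_dist N H md.
have -> : \sum_s' sdist σ μ N.+1 s' * f s' =
    \sum_s sdist σ μ N s * \sum_s' kernel σ s s' * f s'.
  under eq_bigr do rewrite sdistS mulr_suml.
  rewrite exchange_big /=; apply: eq_bigr => s _; rewrite mulr_sumr.
  by apply: eq_bigr => s' _; rewrite mulrA.
rewrite /exp_reward mulr_sumr -big_split /= -convexD_const //.
apply: ler_sum => s _; rewrite mulrCA -mulrDr; apply: ler_wpM2l => //.
by rewrite -bellman_opE //; exact: hb.
Qed.

Lemma supersolution_partial_sums σ μ r (f : S -> R) D : is_profile σ -> is_dist μ ->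
  (forall s, bellman_op σ r f s <= f s + D) ->
  forall N, series (fun k => d ^+ k * exp_reward σ μ r k) N <=
    \sum_s μ s * f s - d ^+ N * \sum_s sdist σ μ N s * f s + D * series (geometric 1 d) N.
Proof.
move=> H md hb.
elim=> [|N IH]; first by rewrite /series /= !big_geq // expr0 mul1r subrr mulr0 addr0.
have step := ler_wpM2l (discX_ge0 N) (@supersolution_step σ μ r f D N H md hb).
rewrite !seriesS /geometric /= mul1r.
by move: IH step; rewrite !mulrDr !mulrA -exprSr; lra.
Qed.

Lemma value_le_supersolution σ μ r (f : S -> R) D : is_profile σ -> is_dist μ ->
  (forall s, bellman_op σ r f s <= f s + D) ->
  value σ μ r <= \sum_s μ s * f s + (1 - d)^-1 * D.
Proof.
move=> H md hb; have [d0 d1] := andP disc_range.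
have nd1 : `|d| < 1 by rewrite ger0_norm.
set F := \sum_s `|f s|.
pose bound N := \sum_s μ s * f s + F * d ^+ N + D * series (geometric 1 d) N.
have bound_cvg : bound @ \oo --> \sum_s μ s * f s + 0 + D * (1 * (1 - d)^-1).
  apply: cvgD; first apply: cvgD.
  - exact: cvg_cst.
  - exact: cvg_geometric.
  - by apply: cvgMl_tmp; exact: cvg_geometric_series.
rewrite (_ : _ + _ * D = limn bound); last first.
  by rewrite (cvg_lim _ bound_cvg) // addr0 mul1r mulrC.
apply: ler_lim; [exact: value_cvg | exact: cvgP bound_cvg | apply: nearW => N].
apply: le_trans (@supersolution_partial_sums σ μ r f D H md hb N) _.
have fN : `|\sum_s sdist σ μ N s * f s| <= F.
  apply: convex_norm_le; first exact: sdist_dist.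
  by move=> s; rewrite /F (bigD1 s) //= lerDl; apply: sumr_ge0 => *.
have := ler_wpM2l (discX_ge0 N) (lerNnormlW fN); rewrite /bound; lra.
Qed.

End MarkovGame.

Section Regularisation.
Variable R : realType.
Variable G : mgame R.
Hypothesis wf : wf_game G.
Variable tau : R.
Hypothesis tau_gt0 : 0 < tau.
Variable i : player G.
Local Notation S := (state G).
Local Notation d := (disc G).

Definition reg_reward (q : S -> act i -> R) (s : S) (a : jact G) : R :=
  reward i s a - tau * nu (q s).

Lemma deviate_profile π (p : S -> act i -> R) :
  is_profile π -> is_policy p -> is_profile (deviate π i p).
Proof.
move=> H hp j; rewrite /deviate; case: (eqVneq i j) => [<-|nij].
  by rewrite dfwithin.
by rewrite dfwithout.
Qed.

Lemma jprob_deviate π (p : S -> act i -> R) s (a : jact G) :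
  jprob (deviate π i p) s a = p s (a i) * \prod_(j | j != i) π j s (a j).
Proof.
rewrite /jprob (bigD1 i) //= /deviate dfwithin; congr (_ * _).
by apply: eq_bigr => j hj; rewrite dfwithout // eq_sym.
Qed.

Lemma deviate_self π s (a : jact G) : jprob (deviate π i (π i)) s a = jprob π s a.
Proof. by rewrite jprob_deviate /jprob [RHS](bigD1 i). Qed.

Lemma Vt_value π s : Vt tau i s π = value π (dirac R s) (reg_reward (π i)).
Proof. by []. Qed.

Lemma Qtp_bellman π (p : S -> act i -> R) s :
  Qtp tau i s π (p s) =
  bellman_op (deviate π i p) (reg_reward (π i)) (fun s' => Vt tau i s' π) s.
Proof.
rewrite /Qtp /Qt /bellman_op (partition_big (fun a : jact G => a i) predT) //=.
apply: eq_bigr => ai _; rewrite mulr_sumr; apply: eq_bigr => a /eqP <-.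
by rewrite jprob_deviate mulrA.
Qed.

Lemma Qtp_self π s : is_profile π -> Qtp tau i s π (π i s) = Vt tau i s π.
Proof.
move=> H; rewrite Vt_value (value_bellman wf _ _ H) (Qtp_bellman π (π i)).
by apply: eq_bigr => a _; rewrite deviate_self.
Qed.

(* Delta_i(s) dominates the regularised improvement of any mixed action q; the
   supremum defining it is over a set bounded by sum |Q| + tau log |A_i|. *)
Lemma Delta_ge π s (q : act i -> R) : is_dist q ->
  Qtp tau i s π q - tau * nu q - (Qtp tau i s π (π i s) - tau * nu (π i s)) <= Delta tau π i s.
Proof.
move=> qd; rewrite /Delta lerD2r.
set E := [set x | exists p : act i -> R, is_dist p /\ x = Qtp tau i s π p - tau * nu p].
have hE : has_ubound E.
  exists (\sum_a `|Qt tau i s a π| + tau * ln (#|act i|%:R)) => y [q' [q'd ->]].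
  apply: lerD.
    apply: le_trans (ler_norm _) _; apply: convex_norm_le => // a.
    by rewrite (bigD1 a) //= lerDl; apply: sumr_ge0 => *.
  by rewrite -mulrN; apply: ler_wpM2l; [exact: ltW | exact: entropy_le_ln_card].
by apply: (ub_le_sup hE); exists q.
Qed.

Lemma deviation_supersolution π (p : S -> act i -> R) D :
  is_profile π -> is_policy p -> (forall s, Delta tau π i s <= D) ->
  forall s, bellman_op (deviate π i p) (reg_reward p) (fun s' => Vt tau i s' π) s
            <= Vt tau i s π + D.
Proof.
move=> H hp hD s.
have Hσ := deviate_profile H hp.
have shift : bellman_op (deviate π i p) (reg_reward p) (fun s' => Vt tau i s' π) s =
    Qtp tau i s π (p s) + (tau * nu (π i s) - tau * nu (p s)).
  rewrite Qtp_bellman /bellman_op -convexD_const; last exact: (proj2 (jprob_dist s Hσ)).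
  by apply: eq_bigr => a _; congr (_ * _); rewrite /reg_reward; lra.
have := Delta_ge π s (hp s); rewrite Qtp_self // shift.
by move: (hD s); lra.
Qed.

(* Dropping the (nonnegative) entropy bonus can only lower the value. *)
Lemma value_le_reg π μ (p : S -> act i -> R) : is_profile π -> is_policy p ->
  is_dist μ -> V i μ π <= value π μ (reg_reward p).
Proof.
move=> H hp md; apply: value_le => // s a; rewrite /reg_reward lerDl oppr_ge0.
by apply: mulr_ge0_le0; [exact: ltW | exact: nu_le0 (hp s)].
Qed.

(* The entropy bonus is at most tau log |A_i| per step. *)
Lemma reg_le_value π μ : is_profile π -> is_dist μ ->
  value π μ (reg_reward (π i)) <= V i μ π + (1 - d)^-1 * (tau * ln (#|act i|%:R)).
Proof.
move=> H md; rewrite /V -valueD_const //; apply: value_le => // s a.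
rewrite /reg_reward lerD2l -mulrN; apply: ler_wpM2l; first exact: ltW.
exact: entropy_le_ln_card (H i s).
Qed.

End Regularisation.

Lemma BR_dist (R : realType) (G : mgame R) (tau : R) (π : profile G) (i : player G)
    (s : state G) :
  wf_game G -> is_dist (BR tau π i s).
Proof.
move=> wf; have /card_gt0P [a0 _] : (0 < #|act i|)%N by case: wf => _ _ _; apply.
set Z := \sum_b expR (Qt tau i s b π / tau).
have Z0 : 0 < Z.
  rewrite /Z (bigD1 a0) //=; apply: ltr_pwDl; first exact: expR_gt0.
  by apply: sumr_ge0 => b _; exact/ltW/expR_gt0.
split => [a|]; rewrite /BR -/Z; first by apply: divr_ge0; [exact/ltW/expR_gt0 | exact: ltW].
by rewrite -mulr_suml -/Z mulfV // gt_eqF.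
Qed.

Lemma smisbr_profiles (R : realType) (G : mgame R) (tau : R) (pis : nat -> profile G)
    (ib : nat -> player G) (sb : nat -> state G) (t : nat) :
  wf_game G -> smisbr_run_upto tau pis ib sb t ->
  forall k, (k <= t)%N -> is_profile (pis k).
Proof.
move=> wf [h0 hk]; elim=> [|k IH] hkt.
  rewrite h0 => i s; split => [a|]; first by rewrite invr_ge0 ler0n.
  rewrite sumr_const -[_ *+ _]mulr_natr mulVf // pnatr_eq0 -lt0n.
  by case: wf => _ _ _; apply.
have [_ _ next] := hk k (ltnW hkt); rewrite next //.
apply: deviate_profile => [|s']; first exact: IH (ltnW hkt).
by case: (s' == sb k); [exact: BR_dist | exact: IH (ltnW hkt) (ib k) s'].
Qed.

Theorem mainTheorem13 (R : realType) (G : mgame R) (tau : R)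
  (mu : state G -> R) (pis : nat -> profile G)
  (ib : nat -> player G) (sb : nat -> state G) (t : nat) :
  wf_game G -> 0 < tau -> is_dist mu ->
  smisbr_run_upto tau pis ib sb t ->
  forall (i : player G) (p : state G -> act i -> R), is_policy p ->
    V i mu (deviate (pis t) i p) - V i mu (pis t)
    <= (1 - disc G)^-1 *
       (Delta tau (pis t) (ib t) (sb t) + 2 * tau * ln ((Abar G)%:R)).
Proof.
move=> wf tau0 mud run i p hp.
set π := pis t; set D := Delta tau π (ib t) (sb t).
have Hπ : is_profile π := smisbr_profiles wf run t (leqnn t).
have Hσ := deviate_profile Hπ hp.
have Dmax : forall s, Delta tau π i s <= D.
  by case: run => _ /(_ t (leqnn t)) [_ h _] s; exact: h.
have supersol := deviation_supersolution wf _ tau0 _ Hπ hp Dmax.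
have dev := value_le_supersolution wf _ _ _ Hσ mud supersol.
have plain_dev := value_le_reg wf _ tau0 Hσ hp mud.
have reg_pi := reg_le_value wf _ tau0 i Hπ mud.
have avg_f : \sum_s mu s * Vt tau i s π = value π mu (reg_reward tau i (π i)).
  exact/esym/(value_lin wf).
have nA : (0 < #|act i|)%N by case: wf => _ _ _; apply.
have AA : (#|act i| <= Abar G)%N := @leq_bigmax _ (fun j : player G => #|act j|) i.
have lnAi : ln (#|act i|%:R : R) <= ln ((Abar G)%:R).
  by rewrite ler_ln ?posrE ?ltr0n ?ler_nat // (leq_trans nA AA).
have lnA0 : 0 <= ln ((Abar G)%:R : R) by rewrite ln_ge0 // ler1n (leq_trans nA AA).
have d1 : 0 <= (1 - disc G)^-1.
  by rewrite invr_ge0 subr_ge0; case/andP: (disc_range wf) => _ /ltW.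
have c0 : 0 <= (1 - disc G)^-1 * (tau * ln ((Abar G)%:R : R)).
  by apply: mulr_ge0 => //; exact: mulr_ge0 (ltW tau0) lnA0.
have lnT : (1 - disc G)^-1 * (tau * ln (#|act i|%:R : R)) <=
           (1 - disc G)^-1 * (tau * ln ((Abar G)%:R : R)).
  by rewrite ler_wpM2l // ler_wpM2l // ltW.
move: dev plain_dev reg_pi avg_f c0 lnT; rewrite /V /value; lra.
Qed.
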